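(* Let $M_G$ be a connected mixed graph whose underlying graph contains a triangle. Then $\rho(M_G)<2$ if and only if $M_G$ is itself a semi-positive triangle or a semi-negative triangle.
   Context: A mixed graph $M_G$ is obtained from a finite simple graph $G$ by orienting the edges of some subset of $E(G)$; it is connected if $G$ is. With $\omega=\frac{1+\mathbf{i}\sqrt3}{2}$, $N(M_G)=(n_{st})$ has entry $\omega$ for an arc from $u_s$ to $u_t$, $\bar\omega$ for an arc from $u_t$ to $u_s$, $1$ for an undirected edge, $0$ otherwise; $\rho(M_G)$ is the maximum absolute value of an eigenvalue of $N(M_G)$. A mixed triangle is a mixed graph with underlying graph $K_3$ on $v_1v_2v_3$, with weight $n_{12}n_{23}n_{31}$; it is semi-positive if the weight is $\omega$ or $\bar\omega$ and semi-negative if it is $-\omega$ or $-\bar\omega$. *)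

From HB Require Import structures.
From mathcomp Require Import all_boot all_order all_algebra all_field.
Set Implicit Arguments. Unset Strict Implicit. Unset Printing Implicit Defensive.
Import Order.TTheory GRing.Theory Num.Theory.
Local Open Scope ring_scope.

(** A mixed graph on the vertex set 'I_n: an underlying finite simple graph
    [mg_adj] (symmetric, irreflexive) together with a set of arcs [mg_arc];
    [mg_arc u v] means the edge {u,v} is oriented from u to v. *)
Record mixed_graph (n : nat) := MixedGraph {
  mg_adj : rel 'I_n;
  mg_arc : rel 'I_n;
  mg_adj_sym : symmetric mg_adj;
  mg_adj_irr : irreflexive mg_adj;
  mg_arc_adj : forall u v, mg_arc u v -> mg_adj u v;
  mg_arc_asym : forall u v, mg_arc u v -> ~~ mg_arc v u
}.

Definition omega : algC := (1 + 'i * sqrtC 3) / 2.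

Definition Nmx n (M : mixed_graph n) : 'M[algC]_n :=
  \matrix_(s, t)
    (if mg_arc M s t then omega
     else if mg_arc M t s then omega^*
     else if mg_adj M s t then 1 else 0).

Definition eigenvalues n (A : 'M[algC]_n) : seq algC :=
  sval (closed_field_poly_normal (char_poly A)).

Definition spectral_radius n (A : 'M[algC]_n) : algC :=
  \big[Num.max/0]_(z <- eigenvalues A) `|z|.

Definition rho n (M : mixed_graph n) : algC := spectral_radius (Nmx M).

Definition connected_mg n (M : mixed_graph n) : Prop :=
  forall u v : 'I_n, connect (mg_adj M) u v.

Definition has_triangle n (M : mixed_graph n) : Prop :=
  exists u v w : 'I_n,
    [&& mg_adj M u v, mg_adj M v w & mg_adj M w u].

Definition is_mixed_triangle n (M : mixed_graph n) : Prop :=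
  n = 3%N /\ forall u v : 'I_n, u != v -> mg_adj M u v.

Definition tri_weight n (M : mixed_graph n) (u v w : 'I_n) : algC :=
  Nmx M u v * Nmx M v w * Nmx M w u.

Definition semi_positive_triangle n (M : mixed_graph n) : Prop :=
  is_mixed_triangle M /\
  exists u v w : 'I_n, [&& u != v, v != w & w != u] /\
    (tri_weight M u v w = omega \/ tri_weight M u v w = omega^*).

Definition semi_negative_triangle n (M : mixed_graph n) : Prop :=
  is_mixed_triangle M /\
  exists u v w : 'I_n, [&& u != v, v != w & w != u] /\
    (tri_weight M u v w = - omega \/ tri_weight M u v w = - omega^*).

(* Every entry of N(M_G) lies in {0, 1, omega, conj omega}, a subset of the
   Eisenstein integers Z[omega], and since N is Hermitian,
   ||x N'|| <= rho ||x|| for every principal submatrix N' of N.  Hence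
   rho >= 2 as soon as some Eisenstein vector x has ||x N'||^2 >= 4 ||x||^2,
   which is a finite integer computation.
   If n > 3, connectivity yields a vertex outside the triangle adjacent to it;
   for each of the finitely many weightings of the induced subgraph on these
   four vertices, a row of N' - 1, N' + 1 or N'^2 - 1 is such an x.
   If n = 3, then N^3 = 3 N + (tau + conj tau) 1 where tau is the weight of the
   triangle, a unit of Z[omega].  For tau = 1 or -1 a test vector again gives
   rho >= 2; otherwise tau is semi-positive or semi-negative,
   tau + conj tau = 1 or -1, and every root of z^3 = 3 z +- 1 has modulus
   less than 2. *)

From HB Require Import structures.
From mathcomp Require Import all_boot all_order all_algebra all_field.
From mathcomp Require Import ring.
Import Order.TTheory GRing.Theory Num.Theory.
Set Implicit Arguments. Unset Strict Implicit. Unset Printing Implicit Defensive.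
Local Open Scope ring_scope.
Local Open Scope sesquilinear_scope.

Lemma omega_sqr : omega ^+ 2 = omega - 1.
Proof.
have i2 : 'i ^+ 2 = -1 :> algC by rewrite sqrCi.
have s3 : sqrtC 3 ^+ 2 = 3 :> algC by rewrite sqrtCK.
rewrite /omega; transitivity ((1 + 2 * 'i * sqrtC 3 + 'i ^+ 2 * sqrtC 3 ^+ 2) / 4 : algC).
  by field; rewrite ?pnatr_eq0.
by rewrite i2 s3; field; rewrite ?pnatr_eq0.
Qed.

Lemma conj_omega : omega^* = 1 - omega.
Proof.
have re_half : (2^-1 : algC) \is Num.real by rewrite realE invr_ge0 ler0n.
have re_im : (sqrtC 3 / 2 : algC) \is Num.real.
  by rewrite realE divr_ge0 ?ler0n ?sqrtC_ge0.
have -> : omega = 2^-1 + 'i * (sqrtC 3 / 2) by rewrite /omega; field; rewrite ?pnatr_eq0.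
by rewrite conjC_rect //; field; rewrite ?pnatr_eq0.
Qed.

Lemma omega_addC : omega + omega^* = 1.
Proof. by rewrite conj_omega addrC subrK. Qed.

(* [eis] encodes a + b omega as the pair (a, b): the finite case analyses
   below are decided by [vm_compute], which cannot evaluate in [algC]. *)
Definition eis := (int * int)%type.

Definition eisC (p : eis) : algC := p.1%:~R + p.2%:~R * omega.

Definition eis_add (p q : eis) : eis := (p.1 + q.1, p.2 + q.2).
Definition eis_mul (p q : eis) : eis :=
  (p.1 * q.1 - p.2 * q.2, p.1 * q.2 + p.2 * q.1 + p.2 * q.2).
Definition eis_conj (p : eis) : eis := (p.1 + p.2, - p.2).
Definition eis_norm (p : eis) : int := p.1 * p.1 + p.1 * p.2 + p.2 * p.2.

Lemma eisC_add p q : eisC (eis_add p q) = eisC p + eisC q.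
Proof. by rewrite /eisC /= !rmorphD /=; ring. Qed.

Lemma eisC_mul p q : eisC (eis_mul p q) = eisC p * eisC q.
Proof.
rewrite /eisC /= !(rmorphD, rmorphB, rmorphM) /=.
transitivity (p.1%:~R * q.1%:~R + (p.1%:~R * q.2%:~R + p.2%:~R * q.1%:~R) * omega
   + p.2%:~R * q.2%:~R * omega ^+ 2 : algC); last by ring.
by rewrite omega_sqr; ring.
Qed.

Lemma eisC_conj p : eisC (eis_conj p) = (eisC p)^*.
Proof.
rewrite /eisC /= [in RHS]rmorphD [in RHS]rmorphM /= conj_omega !rmorph_int.
by rewrite rmorphD rmorphN mulrBr mulr1 addrA mulNr.
Qed.

Lemma eisC_norm p : `|eisC p| ^+ 2 = (eis_norm p)%:~R.
Proof.
rewrite normCK -eisC_conj -eisC_mul /eisC /eis_mul /eis_conj /eis_norm /=.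
have -> : p.1 * - p.2 + p.2 * (p.1 + p.2) + p.2 * - p.2 = 0 by ring.
by rewrite mul0r addr0; congr (_%:~R); ring.
Qed.

Lemma eisC_int (k : int) : eisC (k, 0) = k%:~R.
Proof. by rewrite /eisC mul0r addr0. Qed.

(* Folds over [iota] rather than bigops, which [vm_compute] cannot unfold. *)
Definition int_sum m (F : nat -> int) : int :=
  foldr (fun i s => F i + s) 0 (iota 0 m).
Definition eis_sum m (F : nat -> eis) : eis :=
  foldr (fun i s => eis_add (F i) s) (0, 0) (iota 0 m).

Lemma int_sumE m F : int_sum m F = \sum_(i < m) F i.
Proof.
rewrite -(big_mkord xpredT) /index_iota subn0 /int_sum.
by elim: (iota 0 m) => [|i s IH] /=; rewrite ?big_nil ?big_cons ?IH.
Qed.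

Lemma eisC_sum m F : eisC (eis_sum m F) = \sum_(i < m) eisC (F i).
Proof.
rewrite -(big_mkord xpredT (eisC \o F)) /index_iota subn0 /eis_sum.
elim: (iota 0 m) => [|i s IH]; first by rewrite big_nil eisC_int.
by rewrite big_cons eisC_add IH.
Qed.

Definition eismx m (B : nat -> nat -> eis) : 'M[algC]_m := \matrix_(i, j) eisC (B i j).
Definition eisrow m (y : nat -> eis) : 'rV[algC]_m := \row_j eisC (y j).

Definition eis_mxmul m (B C : nat -> nat -> eis) (i j : nat) : eis :=
  eis_sum m (fun k => eis_mul (B i k) (C k j)).
Definition eis_vecmul m (y : nat -> eis) (B : nat -> nat -> eis) (j : nat) : eis :=
  eis_sum m (fun i => eis_mul (y i) (B i j)).
Definition eis_addI (B : nat -> nat -> eis) (c : eis) (i j : nat) : eis :=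
  eis_add (B i j) (if i == j then c else (0, 0)).
Definition eis_scale (k : int) (B : nat -> nat -> eis) (i j : nat) : eis :=
  eis_mul (k, 0) (B i j).
Definition eis_mx_eq m (B C : nat -> nat -> eis) : bool :=
  all (fun i => all (fun j => B i j == C i j) (iota 0 m)) (iota 0 m).
Definition eis_sqnorm m (y : nat -> eis) : int := int_sum m (fun i => eis_norm (y i)).

Lemma eismxM m B C : eismx m (eis_mxmul m B C) = eismx m B *m eismx m C.
Proof.
apply/matrixP => i j; rewrite !mxE eisC_sum.
by apply: eq_bigr => k _; rewrite eisC_mul !mxE.
Qed.

Lemma eisrowM m y B : eisrow m (eis_vecmul m y B) = eisrow m y *m eismx m B.
Proof.
apply/rowP => j; rewrite !mxE eisC_sum.
by apply: eq_bigr => i _; rewrite eisC_mul !mxE.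
Qed.

Lemma eismx_addI m B c : eismx m (eis_addI B c) = eismx m B + (eisC c)%:M.
Proof.
apply/matrixP => i j; rewrite !mxE eisC_add (inj_eq val_inj).
by case: eqP; rewrite ?mulr1n ?mulr0n ?eisC_int.
Qed.

Lemma eismx_scale m k B : eismx m (eis_scale k B) = k%:~R *: eismx m B.
Proof. by apply/matrixP => i j; rewrite !mxE eisC_mul eisC_int. Qed.

Lemma eismx_eq m B C : eis_mx_eq m B C -> eismx m B = eismx m C.
Proof.
move=> /allP eqBC; apply/matrixP => i j; rewrite !mxE.
have mem_ord (k : 'I_m) : (k : nat) \in iota 0 m by rewrite mem_iota ltn_ord.
by move: (eqBC i (mem_ord i)) => /allP /(_ j (mem_ord j)) /eqP ->.
Qed.

Definition sqnorm m (u : 'rV[algC]_m) : algC := \sum_i `|u 0 i| ^+ 2.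

Lemma sqnorm_eisrow m y : sqnorm (eisrow m y) = (eis_sqnorm m y)%:~R.
Proof.
rewrite /eis_sqnorm int_sumE rmorph_sum; apply: eq_bigr => i _.
by rewrite mxE eisC_norm.
Qed.

Section BigmaxNorm.
Variable R : numDomainType.
Local Notation bigmax s := (\big[Num.max/0]_(x <- s) `|x|).

Lemma bigmax_norm_ge0 (s : seq R) : 0 <= bigmax s.
Proof.
elim: s => [|x s IH]; rewrite ?big_nil ?big_cons //.
by rewrite comparable_le_max ?IH ?orbT // real_comparable ?ger0_real.
Qed.

Lemma bigmax_norm_comparable (x : R) (s : seq R) : `|x| >=< bigmax s.
Proof. by rewrite real_comparable ?normr_real ?ger0_real ?bigmax_norm_ge0. Qed.

Lemma le_bigmax_norm (s : seq R) z : z \in s -> `|z| <= bigmax s.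
Proof.
elim: s => [//|x s IH]; rewrite inE big_cons comparable_le_max ?bigmax_norm_comparable //.
by case/orP => [/eqP ->|/IH ->]; rewrite ?lexx ?orbT.
Qed.

Lemma bigmax_norm_lt (s : seq R) c : 0 < c -> {in s, forall z, `|z| < c} -> bigmax s < c.
Proof.
move=> c_gt0; elim: s => [|x s IH] lt_c; rewrite ?big_nil ?big_cons //.
rewrite comparable_gt_max ?bigmax_norm_comparable // lt_c ?mem_head // IH // => z z_in.
by rewrite lt_c // inE z_in orbT.
Qed.

End BigmaxNorm.

Section SpectralRadius.
Variables (n : nat) (A : 'M[algC]_n).

Lemma mem_eigenvalues z : (z \in eigenvalues A) = eigenvalue A z.
Proof.
rewrite eigenvalue_root_char /eigenvalues; case: closed_field_poly_normal => s /= ->.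
by rewrite (monicP (char_poly_monic A)) scale1r root_prod_XsubC.
Qed.

Lemma spectral_radius_ge0 : 0 <= spectral_radius A.
Proof. exact: bigmax_norm_ge0. Qed.

Lemma eigenvalue_norm_le z : eigenvalue A z -> `|z| <= spectral_radius A.
Proof. by rewrite -mem_eigenvalues; apply: le_bigmax_norm. Qed.

Lemma spectral_radius_lt c :
  0 < c -> (forall z, eigenvalue A z -> `|z| < c) -> spectral_radius A < c.
Proof.
by move=> c_gt0 lt_c; apply: bigmax_norm_lt => // z; rewrite mem_eigenvalues; apply: lt_c.
Qed.

End SpectralRadius.

Lemma sqnormE m (u : 'rV[algC]_m) : sqnorm u = (u *m u ^t*) 0 0.
Proof. by rewrite mxE; apply: eq_bigr => i _; rewrite !mxE normCK. Qed.

Lemma sqnorm_mul_unitary m n (u : 'rV[algC]_m) (P : 'M_(m, n)) :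
  P \is unitarymx -> sqnorm (u *m P) = sqnorm u.
Proof.
move=> /unitarymxP P_unitary.
by rewrite !sqnormE trmx_mul map_mxM mulmxA -(mulmxA u) P_unitary mulmx1.
Qed.

Lemma sqnorm_mul_diag_le n (u d : 'rV[algC]_n) c :
  (forall i, `|d 0 i| <= c) -> sqnorm (u *m diag_mx d) <= c ^+ 2 * sqnorm u.
Proof.
move=> d_le; rewrite /sqnorm mulr_sumr; apply: ler_sum => i _.
rewrite mul_mx_diag mxE normrM exprMn mulrC ler_wpM2r ?exprn_ge0 //.
by rewrite lerXn2r ?nnegrE ?(le_trans _ (d_le i)).
Qed.

Lemma sqnorm_mul_normal_le n (A : 'M[algC]_n) (u : 'rV_n) :
  A \is normalmx -> sqnorm (u *m A) <= spectral_radius A ^+ 2 * sqnorm u.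
Proof.
move=> /orthomx_spectralP A_def.
set P := spectralmx A in A_def; set d := spectral_diag A in A_def.
have P_unitary : P \is unitarymx := spectral_unitarymx A.
have P_unit : P \in unitmx := spectral_unit A.
have d_eigen i : eigenvalue A (d 0 i).
  apply/eigenvalueP; exists (delta_mx 0 i *m P).
    rewrite [in LHS]A_def !mulmxA mulmxK //.
    by rewrite -[_ *m diag_mx d]rowE row_diag_mx scalemxAl.
  rewrite mulmx_free_eq0 ?row_free_unit //.
  by apply/eqP => /matrixP /(_ 0 i) /eqP; rewrite !mxE !eqxx oner_eq0.
rewrite {1}A_def invmx_unitary // !mulmxA sqnorm_mul_unitary //.
rewrite -(sqnorm_mul_unitary u (_ : P ^t* \is unitarymx)) ?trmxC_unitary //.
by apply: sqnorm_mul_diag_le => i; exact/eigenvalue_norm_le/d_eigen.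
Qed.

Lemma sqnorm_colsub_le m n (f : 'I_m -> 'I_n) (u : 'rV[algC]_n) :
  injective f -> sqnorm (colsub f u) <= sqnorm u.
Proof.
move=> f_inj; rewrite /sqnorm (eq_bigr (fun j => `|u 0 (f j)| ^+ 2)) => [|j _]; last first.
  by rewrite mxE.
rewrite -(big_imset (fun k => `|u 0 k| ^+ 2)) /=; last by move=> i j _ _ /f_inj.
set S := [set f x | x in _].
rewrite [X in _ <= X](bigID (mem S)) /= lerDl.
by apply: sumr_ge0 => k _; rewrite exprn_ge0.
Qed.

Lemma rowsub1_unitary m n (f : 'I_m -> 'I_n) :
  injective f -> rowsub f (1%:M : 'M[algC]_n) \is unitarymx.
Proof.
move=> f_inj; apply/unitarymxP/matrixP => i j; rewrite !mxE.
rewrite (bigD1 (f i)) //= big1 => [|k /negbTE k_neq]; last first.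
  by rewrite !mxE eq_sym k_neq mul0r.
rewrite !mxE eqxx (inj_eq f_inj) eq_sym addr0 mul1r.
by case: eqP; rewrite ?conjC1 ?conjC0.
Qed.

Lemma sqnorm_mul_mxsub_le m n (A : 'M[algC]_n) (f : 'I_m -> 'I_n) (y : 'rV_m) :
  A \is normalmx -> injective f ->
  sqnorm (y *m mxsub f f A) <= spectral_radius A ^+ 2 * sqnorm y.
Proof.
move=> A_normal f_inj.
rewrite -[A in mxsub _ _ A]mul1mx mxsub_mul mulmxA mulmx_colsub.
apply: le_trans (sqnorm_colsub_le _ f_inj) _.
by rewrite -(sqnorm_mul_unitary y (rowsub1_unitary f_inj)) sqnorm_mul_normal_le.
Qed.

Definition lower_cert m (B : nat -> nat -> eis) (y : nat -> eis) : bool :=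
  (0 < eis_sqnorm m y) && (4 * eis_sqnorm m y <= eis_sqnorm m (eis_vecmul m y B)).

(* An empirically chosen family of test vectors; [K3_checks] and
   [K4_certified] below show that it always contains a certificate. *)
Definition test_rows m (B : nat -> nat -> eis) : seq (nat -> eis) :=
  [seq C i | C <- [:: eis_addI B (-1, 0); eis_addI B (1, 0);
                      eis_addI (eis_mxmul m B B) (-1, 0)], i <- iota 0 m].

Definition certified m (B : nat -> nat -> eis) : bool :=
  has (lower_cert m B) (test_rows m B).

Lemma certified_rho_ge2 n (A : 'M[algC]_n) m (f : 'I_m -> 'I_n) B :
  A \is normalmx -> injective f -> mxsub f f A = eismx m B -> certified m B ->
  2 <= spectral_radius A.
Proof.
move=> A_normal f_inj A_sub /(has_nthP (fun=> (0, 0))) [i _ /andP [S_gt0 S_le]].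
set y := nth _ _ i in S_gt0 S_le.
have := sqnorm_mul_mxsub_le (eisrow m y) A_normal f_inj.
rewrite A_sub -eisrowM !sqnorm_eisrow => rho_bound.
have four : (2 : algC) ^+ 2 = (4 : int)%:~R by rewrite expr2 -natrM.
have : 2 ^+ 2 * (eis_sqnorm m y)%:~R <= spectral_radius A ^+ 2 * (eis_sqnorm m y)%:~R.
  by rewrite four -intrM (le_trans _ rho_bound) // ler_int.
by rewrite ler_pM2r ?ltr0z // ler_pXn2r ?nnegrE ?spectral_radius_ge0.
Qed.

Definition herm_pattern (e : nat -> nat -> eis) (i j : nat) : eis :=
  if (i < j)%N then e i j else if (j < i)%N then eis_conj (e j i) else (0, 0).

Definition K4_pattern (e01 e02 e03 e12 e13 e23 : eis) : nat -> nat -> eis :=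
  herm_pattern (fun i j => match i%N, j%N with
    | 0, 1 => e01 | 0, 2 => e02 | 0, 3 => e03
    | 1, 2 => e12 | 1, 3 => e13 | 2, 3 => e23 | _, _ => (0, 0) end).

Definition K3_pattern (e01 e02 e12 : eis) : nat -> nat -> eis :=
  K4_pattern e01 e02 (0, 0) e12 (0, 0) (0, 0).

Definition unit_entries : seq eis := [:: (1, 0); (0, 1); (1, -1)].
Definition entries : seq eis := (0, 0) :: unit_entries.
Definition semi_weights : seq eis := [:: (0, 1); (1, -1); (0, -1); (-1, 1)].

Definition K3_check (e01 e02 e12 : eis) : bool :=
  let B := K3_pattern e01 e02 e12 in
  let t := eis_mul (eis_mul (B 0 1) (B 1 2)) (B 2 0)%N in
  ((t \in semi_weights) || certified 3 B) &&
  eis_mx_eq 3 (eis_mxmul 3 (eis_mxmul 3 B B) B)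
              (eis_addI (eis_scale 3 B) (eis_add t (eis_conj t))).

Lemma K3_checks :
  all (fun e01 => all (fun e02 => all (fun e12 =>
    K3_check e01 e02 e12) unit_entries) unit_entries) unit_entries.
Proof. by vm_compute. Qed.

Lemma K4_certified :
  all (fun e01 => all (fun e02 => all (fun e03 => all (fun e12 =>
  all (fun e13 => all (fun e23 =>
    certified 4 (K4_pattern e01 e02 e03 e12 e13 e23))
  entries) entries) unit_entries) unit_entries) unit_entries) unit_entries.
Proof. by vm_compute. Qed.

Section MixedGraphMatrix.
Variables (n : nat) (M : mixed_graph n).

Definition Nentry (s t : 'I_n) : eis :=
  if mg_arc M s t then (0, 1) else if mg_arc M t s then (1, -1)
  else if mg_adj M s t then (1, 0) else (0, 0).

Lemma Nmx_entry s t : Nmx M s t = eisC (Nentry s t).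
Proof.
rewrite /Nmx /Nentry mxE.
case: ifP => _; first by rewrite /eisC mul1r add0r.
case: ifP => _; first by rewrite conj_omega /eisC /= rmorph1 rmorphN1 mulN1r.
by case: ifP => _; rewrite eisC_int.
Qed.

Lemma adj_neq s t : mg_adj M s t -> s != t.
Proof. by apply: contraTneq => ->; rewrite mg_adj_irr. Qed.

Lemma Nentry_sym s t : Nentry t s = eis_conj (Nentry s t).
Proof.
rewrite /Nentry (mg_adj_sym M t s).
case st: (mg_arc M s t); first by rewrite (negbTE (mg_arc_asym st)).
by case: (mg_arc M t s); case: (mg_adj M s t).
Qed.

Lemma Nentry_diag s : Nentry s s = (0, 0).
Proof.
rewrite /Nentry mg_adj_irr.
by case ss: (mg_arc M s s) => //; move: (mg_arc_adj ss); rewrite mg_adj_irr.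
Qed.

Lemma Nentry_adj s t : mg_adj M s t -> Nentry s t \in unit_entries.
Proof. by rewrite /Nentry => ->; do ?case: ifP. Qed.

Lemma Nentry_mem s t : Nentry s t \in entries.
Proof. by rewrite /Nentry; do ?case: ifP. Qed.

Lemma Nmx_conj s t : Nmx M t s = (Nmx M s t)^*.
Proof. by rewrite !Nmx_entry Nentry_sym eisC_conj. Qed.

Lemma Nmx_normal : Nmx M \is normalmx.
Proof.
have Nmx_adjoint : Nmx M ^t* = Nmx M.
  by apply/matrixP => s t; rewrite mxE [_^T _ _]mxE -Nmx_conj.
by apply/normalmxP; rewrite Nmx_adjoint.
Qed.

Lemma mxsub_Nmx m (f : 'I_m -> 'I_n) (e : nat -> nat -> eis) :
  (forall i j : 'I_m, (i < j)%N -> Nentry (f i) (f j) = e i j) ->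
  mxsub f f (Nmx M) = eismx m (herm_pattern e).
Proof.
move=> upper; apply/matrixP => i j; rewrite mxE Nmx_entry mxE /herm_pattern.
case: ltngtP => [/upper -> // | /upper <- | /val_inj ->]; last by rewrite Nentry_diag.
by rewrite -Nentry_sym.
Qed.

End MixedGraphMatrix.

Lemma connect_exit (T : finType) (e : rel T) (S : {pred T}) x y :
  connect e x y -> x \in S -> y \notin S ->
  exists t d, [/\ t \in S, d \notin S & e t d].
Proof.
move=> /connectP [p]; elim: p x => [|z p IH] x /=; first by move=> _ -> ->.
case/andP=> exz pz y_last xS yS.
by have [zS|zS] := boolP (z \in S); [exact: IH pz y_last zS yS | exists x, z].
Qed.

Lemma triangle_pendant_rho_ge2 n (M : mixed_graph n) (u v w d : 'I_n) :
  mg_adj M u v -> mg_adj M v w -> mg_adj M w u -> mg_adj M u d ->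
  d != v -> d != w -> 2 <= rho M.
Proof.
move=> uv vw wu ud dv dw.
pose f (i : 'I_4) := nth u [:: u; v; w; d] i.
have f_inj : injective f.
  have : uniq [:: u; v; w; d].
    rewrite /= !inE !negb_or (adj_neq uv) (adj_neq ud) (adj_neq vw) eq_sym (adj_neq wu).
    by rewrite eq_sym dv eq_sym dw.
  by move=> uniq_f i j /eqP; rewrite nth_uniq // => /eqP /val_inj.
have uw : mg_adj M u w by rewrite mg_adj_sym.
apply: (@certified_rho_ge2 _ _ _ f (K4_pattern (Nentry M u v) (Nentry M u w)
    (Nentry M u d) (Nentry M v w) (Nentry M v d) (Nentry M w d))).
- exact: Nmx_normal.
- exact: f_inj.
- by apply: mxsub_Nmx => -[[|[|[|[|//]]]] ?] [[|[|[|[|//]]]] ?].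
move/allP: K4_certified => /(_ _ (Nentry_adj uv)) /allP /(_ _ (Nentry_adj uw)).
move=> /allP /(_ _ (Nentry_adj ud)) /allP /(_ _ (Nentry_adj vw)).
by move=> /allP /(_ _ (Nentry_mem _ _ _)) /allP /(_ _ (Nentry_mem _ _ _)).
Qed.

Lemma rho_ge2_of_gt3 n (M : mixed_graph n) :
  connected_mg M -> has_triangle M -> (3 < n)%N -> 2 <= rho M.
Proof.
move=> conn [u [v [w /and3P [uv vw wu]]]] n_gt3.
have [y y_out] : exists y : 'I_n, y \notin [:: u; v; w].
  apply/existsP; apply: contraLR n_gt3 => /existsPn all_in; rewrite -leqNgt.
  rewrite -[n]card_ord -[3%N]/(size [:: u; v; w]); apply: leq_trans (card_size _).
  by apply/subset_leq_card/subsetP => z _; move: (all_in z); rewrite negbK.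
have [t [d [t_in d_out td]]] := connect_exit (conn u y) (mem_head _ _) y_out.
move: d_out; rewrite !inE !negb_or => /and3P [du dv dw].
move: t_in; rewrite !inE => /or3P [] /eqP t_eq; subst t.
- exact: triangle_pendant_rho_ge2 uv vw wu td dv dw.
- exact: triangle_pendant_rho_ge2 vw wu uv td dw du.
- exact: triangle_pendant_rho_ge2 wu uv vw td du dv.
Qed.

Lemma cubic_root_lt2 (R : numDomainType) (z c : R) :
  z ^+ 3 = 3 * z + c -> `|c| <= 1 -> `|z| < 2.
Proof.
move=> zc c_le1; rewrite real_ltNge ?normr_real ?realn //; apply/negP => z_ge2.
have z_cube : `|z| ^+ 3 <= 3 * `|z| + 1.
  by rewrite -normrX zc (le_trans (ler_normD _ _)) // normrM normr_nat lerD2l.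
have : 4 * `|z| <= `|z| ^+ 3.
  rewrite exprSr ler_wpM2r // -[4]/((2 * 2)%N%:R) natrM -expr2.
  by rewrite lerXn2r ?nnegrE ?ler0n.
move=> /le_trans /(_ z_cube); rewrite -[4]/((3 + 1)%N%:R) natrD mulrDl mul1r lerD2l.
by move=> /(le_trans z_ge2); rewrite lern1.
Qed.

Lemma eigenvalue_cubic (F : fieldType) n (A : 'M[F]_n) (c z : F) :
  A *m A *m A = 3 *: A + c%:M -> eigenvalue A z -> z ^+ 3 = 3 * z + c.
Proof.
move=> A_cube /eigenvalueP [x xA x_neq0].
have : x *m (A *m A *m A) = (3 * z + c) *: x.
  by rewrite A_cube mulmxDr -scalemxAr xA mul_mx_scalar scalerA scalerDl.
rewrite !mulmxA xA -scalemxAl xA scalerA -scalemxAl xA scalerA => /eqP.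
rewrite -subr_eq0 -scalerBl scaler_eq0 (negbTE x_neq0) orbF subr_eq0 => /eqP <-.
by rewrite !exprS expr0 mulr1 mulrA.
Qed.

Lemma tri_weight_rot n (M : mixed_graph n) u v w :
  tri_weight M v w u = tri_weight M u v w.
Proof. by rewrite /tri_weight mulrC mulrA. Qed.

Lemma tri_weight_rev n (M : mixed_graph n) u v w :
  tri_weight M w v u = (tri_weight M u v w)^*.
Proof.
rewrite /tri_weight (Nmx_conj M v w) (Nmx_conj M u v) (Nmx_conj M w u) !rmorphM /=.
by rewrite [X in X * _ = _]mulrC.
Qed.

Lemma triangle_card n (M : mixed_graph n) : has_triangle M -> (3 <= n)%N.
Proof.
move=> [u [v [w /and3P [uv vw wu]]]].
have uniq_uvw : uniq [:: u; v; w].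
  by rewrite /= !inE negb_or (adj_neq uv) eq_sym (adj_neq wu) (adj_neq vw).
by rewrite -(card_ord n) -[3%N]/(size [:: u; v; w]) -(card_uniqP uniq_uvw) max_card.
Qed.

Definition v0 : 'I_3 := @Ordinal 3 0 isT.
Definition v1 : 'I_3 := @Ordinal 3 1 isT.
Definition v2 : 'I_3 := @Ordinal 3 2 isT.

Lemma ord3_cases (P : 'I_3 -> Prop) : P v0 -> P v1 -> P v2 -> forall i, P i.
Proof. by move=> P0 P1 P2 [[|[|[|//]]] i_lt]; rewrite (bool_irrelevance i_lt isT). Qed.

Lemma triangle3_complete (M : mixed_graph 3) :
  has_triangle M -> forall s t, s != t -> mg_adj M s t.
Proof.
move=> [u [v [w /and3P []]]]; move: u v w.
do 3!apply: ord3_cases; rewrite ?mg_adj_irr // => uv vw wu.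
all: do 2!apply: ord3_cases; move=> //= _; by rewrite // mg_adj_sym ?uv ?vw ?wu.
Qed.

Lemma eisC_semi_weight t : t \in semi_weights ->
  (eisC t = omega \/ eisC t = omega^*) \/ (eisC t = - omega \/ eisC t = - omega^*).
Proof.
rewrite !inE conj_omega /eisC => /or4P [] /eqP -> /=.
- by left; left; rewrite mul1r add0r.
- by left; right; rewrite rmorph1 rmorphN1 mulN1r.
- by right; left; rewrite rmorphN1 mulN1r add0r.
- by right; right; rewrite rmorphN1 mul1r opprB addrC.
Qed.

Section Triangle.
Variable M : mixed_graph 3.
Hypothesis M_complete : forall s t : 'I_3, s != t -> mg_adj M s t.

Local Notation B := (K3_pattern (Nentry M v0 v1) (Nentry M v0 v2) (Nentry M v1 v2)).
Local Notation t := (eis_mul (eis_mul (B 0 1) (B 1 2)) (B 2 0))%N.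
Local Notation tau := (tri_weight M v0 v1 v2).

Lemma Nmx_K3 : Nmx M = eismx 3 B.
Proof.
rewrite -[Nmx M]mxsub_id; apply: mxsub_Nmx.
by do 2!apply: ord3_cases.
Qed.

Lemma tri_weight_K3 : tau = eisC t.
Proof. by rewrite /tri_weight Nmx_K3 !mxE !eisC_mul. Qed.

Lemma K3_check_Nentry : K3_check (Nentry M v0 v1) (Nentry M v0 v2) (Nentry M v1 v2).
Proof.
have adj s s' : s != s' -> Nentry M s s' \in unit_entries by move/M_complete/Nentry_adj.
move/allP: K3_checks => /(_ _ (adj v0 v1 isT)) /allP /(_ _ (adj v0 v2 isT)).
by move=> /allP /(_ _ (adj v1 v2 isT)).
Qed.

Lemma K3_semi_of_rho_lt2 :
  rho M < 2 -> semi_positive_triangle M \/ semi_negative_triangle M.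
Proof.
move=> rho_lt2; have /andP [/orP [t_semi | t_cert] _] := K3_check_Nentry; last first.
  have M_sub : mxsub id id (Nmx M) = eismx 3 B by rewrite mxsub_id Nmx_K3.
  have := certified_rho_ge2 (Nmx_normal M) (@inj_id _) M_sub t_cert.
  by move=> /le_lt_trans /(_ rho_lt2); rewrite ltxx.
have triM : is_mixed_triangle M by [].
case: (eisC_semi_weight t_semi) => [t_pos | t_neg]; [left | right];
  by split => //; exists v0, v1, v2; rewrite tri_weight_K3.
Qed.

Lemma Nmx_K3_cube : Nmx M *m Nmx M *m Nmx M = 3 *: Nmx M + (tau + tau^*)%:M.
Proof.
have /andP [_ /eismx_eq] := K3_check_Nentry.
by rewrite !eismxM eismx_addI eismx_scale eisC_add eisC_conj -tri_weight_K3 -Nmx_K3.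
Qed.

Lemma tri_weight_K3_perm u v w : [&& u != v, v != w & w != u] ->
  tri_weight M u v w = tau \/ tri_weight M u v w = tau^*.
Proof.
move: u v w; do 3!apply: ord3_cases; move=> //= _.
all: by [ left | left; rewrite tri_weight_rot | left; rewrite -tri_weight_rot
        | right; rewrite tri_weight_rev | right; rewrite tri_weight_rev tri_weight_rot
        | right; rewrite tri_weight_rev -tri_weight_rot ].
Qed.

Lemma K3_rho_lt2_of_semi :
  semi_positive_triangle M \/ semi_negative_triangle M -> rho M < 2.
Proof.
move=> semi.
have trace_perm u v w : [&& u != v, v != w & w != u] ->
    tri_weight M u v w + (tri_weight M u v w)^* = tau + tau^*.
  by case/tri_weight_K3_perm => ->; rewrite ?conjCK // addrC.
have trace_unit : `|tau + tau^*| = 1.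
  case: semi => -[_ [u [v [w [/trace_perm <- [] ->]]]]].
  - by rewrite omega_addC normr1.
  - by rewrite conjCK addrC omega_addC normr1.
  - by rewrite rmorphN /= -opprD omega_addC normrN normr1.
  - by rewrite rmorphN /= conjCK -opprD addrC omega_addC normrN normr1.
apply: spectral_radius_lt => // z /(eigenvalue_cubic Nmx_K3_cube) z_cube.
by apply: cubic_root_lt2 z_cube _; rewrite trace_unit.
Qed.

End Triangle.

Theorem lemma6p14 (n : nat) (M : mixed_graph n) :
  connected_mg M -> has_triangle M ->
  (rho M < 2 <-> semi_positive_triangle M \/ semi_negative_triangle M).
Proof.
move=> conn tri; case: (ltngtP n 3) => [n_lt3 | n_gt3 | n_eq3].
- by move: (triangle_card tri); rewrite leqNgt n_lt3.
- have rho_ge2 := rho_ge2_of_gt3 conn tri n_gt3.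
  have not_K3 : ~ is_mixed_triangle M by case=> n_eq3; rewrite n_eq3 ltnn in n_gt3.
  by split=> [/(le_lt_trans rho_ge2) | [] [/not_K3 []]]; rewrite ltxx.
- subst n; have complete := triangle3_complete tri.
  by split; [exact: K3_semi_of_rho_lt2 | exact: K3_rho_lt2_of_semi].
Qed.
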